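(* Let $G$ be a symmetric game with BK type spaces $T_1,\ldots,T_n$ and maps $f_i:T_i\to\mathcal{N}_\omega(U_{-i})$ as described in the context, and suppose there is exactly one superrationally justifiable action. If for each player $i$ the state $(a_i,t_i)$ of player $i$ lies in $\mathcal{SR}^i$, then the action profile $(a_1,\ldots,a_n)$ is a superrational profile.
   Context: A game $G=\langle I,\{A_i\},\{\pi_i\}\rangle$ has players $I=\{1,\ldots,n\}$, finite action sets $A_i$ and payoffs $\pi_i:\prod_i A_i\to\mathbb{R}$. It is symmetric if $A_i=A_j$ for all $i,j$ and $\pi_i(a_1,\ldots,a_n)=\pi_{\tau^{-1}(i)}(a_{\tau(1)},\ldots,a_{\tau(n)})$ for every permutation $\tau$ of $I$, every profile and every $i$. An action $a^*$ is superrationally justifiable if $\pi_i(a^*,\ldots,a^* )\ge\pi_i(b,\ldots,b)$ for every $i$ and every action $b$; the profile $(a^*,\ldots,a^* )$ is then a superrational profile. Each player $i$ has a type set $T_i$; let $U_{-i}=\prod_{j\ne i}(A_j\times T_j)$ and $f_i:T_i\to\mathcal{N}_\omega(U_{-i})$, where $\mathcal{N}_\omega(X)$ is the set of finite nonempty subsets of $X$. The state of player $i$ is a pair $(a_i,t_i)\in A_i\times T_i$. An identification relation is an equivalence relation $R$ on $\bigcup_{i\in I}T_i$ such that for all $i,j\in I$, if $t_iRt_j$ (with $t_i\in T_i$, $t_j\in T_j$) then there is a permutation $\tau$ of $I$ with $\tau(i)=j$ such that for every $((a_k,u_k))_{k\ne i}\in f_i(t_i)$ there is $((b_l,v_l))_{l\ne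 j}\in f_j(t_j)$ with $a_k=b_{\tau(k)}$ and $u_kRv_{\tau(k)}$ for all $k\ne i$. The state $(a,t_i)$ of player $i$ is in $\mathcal{SR}^i$ (a superrational state) iff $f_i(t_i)$ is a singleton $\{((a,t_j))_{j\ne i}\}$ for some types $t_j\in T_j$, where $a$ is superrationally justifiable, and there exists an identification relation $R$ with $t_jRt_i$ for all $j\ne i$. *)

From HB Require Import structures.
From mathcomp Require Import all_boot all_order all_algebra all_fingroup.
From mathcomp Require Import reals.
From Stdlib Require List.
Set Implicit Arguments. Unset Strict Implicit. Unset Printing Implicit Defensive.
Import Order.TTheory GRing.Theory Num.Theory.
Local Open Scope ring_scope.

(* Players are 'I_n; since the game is symmetric all players share one finite
   action set A.  Action profiles are {ffun 'I_n -> A}; payoffs are real. *)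

Definition symmetric_game (n : nat) (A : finType) (R : realType)
  (pi : 'I_n -> {ffun 'I_n -> A} -> R) : Prop :=
  forall (tau : {perm 'I_n}) (a : {ffun 'I_n -> A}) (i : 'I_n),
    pi i a = pi ((tau^-1)%g i) [ffun k => a (tau k)].

Definition SR_justifiable (n : nat) (A : finType) (R : realType)
  (pi : 'I_n -> {ffun 'I_n -> A} -> R) (a : A) : Prop :=
  forall (i : 'I_n) (b : A), pi i [ffun=> b] <= pi i [ffun=> a].

Definition superrational_profile (n : nat) (A : finType) (R : realType)
  (pi : 'I_n -> {ffun 'I_n -> A} -> R) (a : {ffun 'I_n -> A}) : Prop :=
  exists astar : A, SR_justifiable pi astar /\ a = [ffun=> astar].

Definition Uminus (n : nat) (A : Type) (T : 'I_n -> Type) (i : 'I_n) : Type :=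
  forall j : 'I_n, j != i -> (A * T j)%type.

Definition fin_nonempty (X : Type) (P : X -> Prop) : Prop :=
  (exists x, P x) /\ (exists s : list X, forall x, P x -> List.In x s).

Definition BK_maps (n : nat) (A : Type) (T : 'I_n -> Type)
  (f : forall i : 'I_n, T i -> Uminus A T i -> Prop) : Prop :=
  forall (i : 'I_n) (ti : T i), fin_nonempty (f i ti).

(* the union of the type sets, taken as the disjoint union *)
Definition alltypes (n : nat) (T : 'I_n -> Type) : Type := {i : 'I_n & T i}.

Definition identification_relation (n : nat) (A : Type) (T : 'I_n -> Type)
  (f : forall i : 'I_n, T i -> Uminus A T i -> Prop)
  (Rl : alltypes T -> alltypes T -> Prop) : Prop :=
  [/\ (forall x, Rl x x),
      (forall x y, Rl x y -> Rl y x),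
      (forall x y z, Rl x y -> Rl y z -> Rl x z) &
      forall (i j : 'I_n) (ti : T i) (tj : T j),
        Rl (existT T i ti) (existT T j tj) ->
        exists tau : {perm 'I_n}, tau i = j /\
          forall u : Uminus A T i, f i ti u ->
            exists v : Uminus A T j, f j tj v /\
              forall (k : 'I_n) (hk : k != i) (hk' : tau k != j),
                (u k hk).1 = (v (tau k) hk').1 /\
                Rl (existT T k (u k hk).2) (existT T (tau k) (v (tau k) hk').2)].

Definition SR_state (n : nat) (A : finType) (R : realType)
  (pi : 'I_n -> {ffun 'I_n -> A} -> R) (T : 'I_n -> Type)
  (f : forall i : 'I_n, T i -> Uminus A T i -> Prop)
  (i : 'I_n) (a : A) (ti : T i) : Prop :=
  exists tt : forall j : 'I_n, T j,
    (forall u : Uminus A T i,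
        f i ti u <-> (forall (j : 'I_n) (hj : j != i), u j hj = (a, tt j))) /\
    SR_justifiable pi a /\
    exists Rl : alltypes T -> alltypes T -> Prop,
      identification_relation f Rl /\
      forall j : 'I_n, j != i -> Rl (existT T j (tt j)) (existT T i ti).
Arguments SR_state {n A R} pi {T} f i a ti.

From HB Require Import structures.
From mathcomp Require Import all_boot all_order all_algebra all_fingroup.
From mathcomp Require Import reals.

(* The action of a superrational state is superrationally justifiable by
   definition; when only one action is justifiable, every player's action is
   that one, so the profile is constant at it. *)

Lemma SR_state_justifiable (n : nat) (A : finType) (R : realType)
    (pi : 'I_n -> {ffun 'I_n -> A} -> R) (T : 'I_n -> Type)
    (f : forall i : 'I_n, T i -> Uminus A T i -> Prop)
    (i : 'I_n) (a : A) (ti : T i) :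
  SR_state pi f i a ti -> SR_justifiable pi a.
Proof. by case=> _ [_ [justified_a _]]. Qed.

Lemma superrational_profile_unique (n : nat) (A : finType) (R : realType)
    (pi : 'I_n -> {ffun 'I_n -> A} -> R) (a : {ffun 'I_n -> A}) :
  (exists! b : A, SR_justifiable pi b) ->
  (forall i : 'I_n, SR_justifiable pi (a i)) ->
  superrational_profile pi a.
Proof.
move=> [astar [justified_astar unique_astar]] justified_a.
exists astar; split=> //.
by apply/ffunP=> i; rewrite ffunE; apply/esym/unique_astar.
Qed.

Theorem theorem4 (n : nat) (A : finType) (R : realType)
  (pi : 'I_n -> {ffun 'I_n -> A} -> R) (T : 'I_n -> Type)
  (f : forall i : 'I_n, T i -> Uminus A T i -> Prop) :
  symmetric_game pi ->
  BK_maps f ->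
  (exists! a : A, SR_justifiable pi a) ->
  forall (a : {ffun 'I_n -> A}) (t : forall i : 'I_n, T i),
    (forall i : 'I_n, SR_state pi f i (a i) (t i)) ->
    superrational_profile pi a.
Proof.
move=> _ _ unique_justifiable a t SR_states.
apply: superrational_profile_unique => // i.
exact: SR_state_justifiable (SR_states i).
Qed.
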